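(* (i) $\mathfrak{L}$ is a system of representatives of $\mathfrak{H}/\!\sim$. (ii) If $\underline h,\underline h'\in\mathfrak{H}$ and $\underline h\sim\underline h'$, then $J^{\underline h}=J^{\underline h'}$ and $\mathfrak{S}^{\underline h}=\mathfrak{S}^{\underline h'}$. (iii) If $\underline\ell,\underline\ell'\in\mathfrak{L}$ and $\underline\ell\ne\underline\ell'$, then $\mathfrak{S}^{\underline\ell}\cap\mathfrak{S}^{\underline\ell'}=\emptyset$. (iv) For each $\underline\ell\in\mathfrak{L}$, the map $m\in\mathfrak{S}^{\underline\ell}\mapsto m^2\bmod 4P$ is constant.
   Context: $r\ge3$; $p_1,\dots,p_r$ positive pairwise coprime, $p_2,\dots,p_r$ odd; $P=p_1\cdots p_r$, $\hat p_j=P/p_j$; $E=\{\pm1\}^r$. $\mathfrak{H}$: $\underline h\in\mathbb{Z}^r$ with $0\le h_j\le p_j$ and $h_j/p_j\notin\mathbb{Z}$ for at least three $j$; $\mathfrak{L}$: those with $h_j$ even for $j\ge2$. $J^{\underline h}=\{j:p_j\mid h_j\}$; $\mathcal{N}^{\underline h}(\underline\varepsilon)=P+\sum_j\varepsilon_jh_j\hat p_j$; $\mathfrak{S}^{\underline h}=\mathcal{N}^{\underline h}(E)+2P\mathbb{Z}$. Equivalence: $\underline h\sim\underline h'$ iff there is $J\subset\{1,\dots,r\}$ with $|J|$ even such that $h_j=p_j-h'_j$ for $j\in J$ and $h_j=h'_j$ for $j\notin J$. *)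

(* Indices 1..r of the paper are 'I_r (0-based): paper's index 1 is ord0. *)
From HB Require Import structures.
From mathcomp Require Import all_boot all_order all_algebra.
Set Implicit Arguments. Unset Strict Implicit. Unset Printing Implicit Defensive.
Import Order.TTheory GRing.Theory Num.Theory.
Local Open Scope ring_scope.

Section Defs.
Variables (r : nat) (p : 'I_r -> nat).

Definition bigP : nat := (\prod_(j < r) p j)%N.
Definition phat (j : 'I_r) : nat := (bigP %/ p j)%N.

Definition inH (h : {ffun 'I_r -> int}) : Prop :=
  (forall j, 0 <= h j /\ h j <= (p j)%:Z) /\
  (3 <= #|[set j : 'I_r | ~~ ((p j)%:Z %| h j)%Z]|)%N.

Definition inL (h : {ffun 'I_r -> int}) : Prop :=
  inH h /\ forall j : 'I_r, (0 < val j)%N -> (2 %| h j)%Z.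

Definition Jset (h : {ffun 'I_r -> int}) : {set 'I_r} :=
  [set j : 'I_r | ((p j)%:Z %| h j)%Z].

Definition hequiv (h h' : {ffun 'I_r -> int}) : Prop :=
  exists J : {set 'I_r}, ~~ odd #|J| /\
    forall j, (j \in J -> h j = (p j)%:Z - h' j) /\ (j \notin J -> h j = h' j).

Definition Nval (h : {ffun 'I_r -> int}) (eps : 'I_r -> int) : int :=
  bigP%:Z + \sum_(j < r) eps j * h j * (phat j)%:Z.

Definition inS (h : {ffun 'I_r -> int}) (m : int) : Prop :=
  exists eps : 'I_r -> int, (forall j, eps j = 1 \/ eps j = -1) /\
    exists k : int, m = Nval h eps + 2 * bigP%:Z * k.
End Defs.

From HB Require Import structures.
From mathcomp Require Import all_boot all_order all_algebra.
From mathcomp Require Import zify ring.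
Import Order.TTheory GRing.Theory Num.Theory.
Local Open Scope ring_scope.

(* Flipping one sign eps_j turns N(eps) = A + B into A - B, where p_j | A
   and p̂_j | B; the squares differ by 4AB, a multiple of 4P, which gives (iv).
   Mirroring h_j to p_j - h_j on a set J while flipping the signs on J changes
   N only by P times a sum of |J| signs, which is even when |J| is, which gives
   (ii).  Modulo p_j every summand of N but the j-th vanishes and p̂_j is a
   unit, so an m in S^l determines eps_j l_j modulo 2 p_j (the factor 2 comes
   from the evenness conditions of L, at j = 1 through the oddness of p̂_1);
   the bounds 0 <= l_j <= p_j then determine l_j, which gives (iii).  For (i),
   the parity of h_j for j >= 2 dictates which of these coordinates must be
   mirrored to land in L, and the evenness of |J| decides the first one. *)

Set Implicit Arguments.
Unset Strict Implicit.

Definition sign_vector (r : nat) (eps : 'I_r -> int) : Prop :=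
  forall j, eps j = 1 \/ eps j = -1.

Definition mirror (r : nat) (p : 'I_r -> nat) (J : {set 'I_r})
    (h : {ffun 'I_r -> int}) : {ffun 'I_r -> int} :=
  [ffun j => if j \in J then (p j)%:Z - h j else h j].

Section Cofactors.
Variables (r : nat) (p : 'I_r -> nat).
Hypothesis p_gt0 : forall j, (0 < p j)%N.

Lemma phatE j : phat p j = (\prod_(k < r | k != j) p k)%N.
Proof. by rewrite /phat /bigP (bigD1 j) //= mulKn. Qed.

Lemma bigPz_phat j : (bigP p)%:Z = (p j)%:Z * (phat p j)%:Z.
Proof. by rewrite phatE /bigP (bigD1 j) //= PoszM. Qed.

Lemma dvdz_phat i j : i != j -> ((p j)%:Z %| (phat p i)%:Z)%Z.
Proof. by move=> ij; rewrite dvdzE phatE (bigD1 j) 1?eq_sym //= dvdn_mulr. Qed.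

Lemma coprime_phat j :
  (forall i, i != j -> coprime (p j) (p i)) -> coprime (p j) (phat p j).
Proof.
move=> cop; rewrite phatE; apply: (big_ind (coprime (p j))) => //.
- exact: coprimen1.
- by move=> x y; rewrite coprimeMr => -> ->.
Qed.

Lemma odd_phat j : (forall i, i != j -> odd (p i)) -> odd (phat p j).
Proof.
move=> odd_p; rewrite phatE.
by apply: (big_ind odd) => // x y; rewrite oddM => -> ->.
Qed.

End Cofactors.

Section SquaresModulo4P.
Variables (r : nat) (p : 'I_r -> nat).
Hypothesis p_gt0 : forall j, (0 < p j)%N.
Local Notation P := (bigP p)%:Z.

Lemma Nval_bigD1 h eps j : Nval p h eps =
  P + (eps j * h j * (phat p j)%:Z + \sum_(i < r | i != j) eps i * h i * (phat p i)%:Z).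
Proof. by rewrite /Nval (bigD1 j). Qed.

Lemma Nval_flip_sqr h eps eps' j :
  (forall i, i != j -> eps' i = eps i) -> eps' j = - eps j ->
  (4 * P %| Nval p h eps ^+ 2 - Nval p h eps' ^+ 2)%Z.
Proof.
move=> eq_off flip.
set rest := \sum_(i < r | i != j) eps i * h i * (phat p i)%:Z.
have rest' : \sum_(i < r | i != j) eps' i * h i * (phat p i)%:Z = rest.
  by apply: eq_bigr => i /eq_off ->.
have /dvdzP[a Ea] : ((p j)%:Z %| P + rest)%Z.
  rewrite rpredD ?(bigPz_phat p_gt0 j) ?dvdz_mulr //.
  by apply: rpred_sum => i ij; apply/dvdz_mull/dvdz_phat.
rewrite !(Nval_bigD1 _ _ j) rest' flip -/rest !(addrCA P) Ea.
by apply/dvdzP; exists (a * eps j * h j); rewrite (bigPz_phat p_gt0 j); ring.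
Qed.

Lemma Nval_sqr_eqmod h eps eps' : sign_vector eps -> sign_vector eps' ->
  (4 * P %| Nval p h eps ^+ 2 - Nval p h eps' ^+ 2)%Z.
Proof.
move=> + s'; move Dn: #|[set i | eps i != eps' i]| => n.
elim: n eps Dn => [|n IH] eps Dn s.
  suff -> : Nval p h eps = Nval p h eps' by rewrite subrr dvdz0.
  congr (_ + _); apply: eq_bigr => i _; congr (_ * _ * _); apply/eqP.
  by apply: contraT => ne; move: (cards0_eq Dn) => /setP/(_ i); rewrite !inE ne.
have /card_gt0P[j] : (0 < #|[set i | eps i != eps' i]|)%N by rewrite Dn.
rewrite inE => ne_j.
pose e := fun i => if i == j then eps' j else eps i.
have flip_j : e j = - eps j.
  by rewrite /e eqxx; move: ne_j; case: (s j) (s' j) => -> [] ->.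
have e_off : forall i, i != j -> e i = eps i by move=> i /negbTE ij; rewrite /e ij.
have s_e : sign_vector e by move=> i; rewrite /e; case: eqP => _; [apply: s' | apply: s].
have card_e : #|[set i | e i != eps' i]| = n.
  have -> : [set i | e i != eps' i] = [set i | eps i != eps' i] :\ j.
    apply/setP => i; rewrite !inE /e.
    by case: (i =P j) => [->|/eqP/negbTE ij]; rewrite ?eqxx ?ij.
  by move: Dn; rewrite (cardsD1 j) inE ne_j => -[].
have := rpredD (Nval_flip_sqr h e_off flip_j) (IH e card_e s_e).
by rewrite addrA subrK.
Qed.

Lemma sqr_mod_inS_const h :
  exists c : int, forall m, inS p h m -> (m ^+ 2 %% (4 * P))%Z = c.
Proof.
exists ((Nval p h (fun _ => 1)) ^+ 2 %% (4 * P))%Z.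
move=> _ [eps [s [k ->]]]; apply/eqP; rewrite eqz_mod_dvd.
have shift : (4 * P %| (Nval p h eps + 2 * P * k) ^+ 2 - Nval p h eps ^+ 2)%Z.
  by apply/dvdzP; exists (k * Nval p h eps + P * k ^+ 2); ring.
have := rpredD shift (Nval_sqr_eqmod h s (fun _ => or_introl erefl)).
by rewrite addrA subrK.
Qed.

End SquaresModulo4P.

Section Equivalence.
Variables (r : nat) (p : 'I_r -> nat).
Hypothesis p_gt0 : forall j, (0 < p j)%N.

Lemma hequiv_sym h h' : hequiv p h h' -> hequiv p h' h.
Proof.
case=> J [evJ hJ]; exists J; split=> // j.
by case: (hJ j) => inJ outJ; split=> [/inJ | /outJ] ->; rewrite ?subKr.
Qed.

Lemma hequiv_mirror h l :
  hequiv p h l <-> exists2 J : {set 'I_r}, ~~ odd #|J| & l = mirror p J h.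
Proof.
split=> [[J [evJ hJ]] | [J evJ ->]]; exists J => //.
  apply/ffunP => j; rewrite ffunE; case: (hJ j) => inJ outJ.
  by case: ifP => [/inJ | /negbT/outJ] ->; rewrite ?subKr.
by split=> // j; rewrite ffunE; split=> [-> | /negbTE ->] /=; rewrite ?subKr.
Qed.

Lemma Jset_hequiv h h' : hequiv p h h' -> Jset p h = Jset p h'.
Proof.
case=> J [_ hJ]; apply/setP => j; rewrite !inE; case: (hJ j) => inJ outJ.
by case: (boolP (j \in J)) => [/inJ | /outJ] ->; rewrite ?rpredBl ?dvdzz.
Qed.

Lemma sum_signs_even (J : {set 'I_r}) eps :
  ~~ odd #|J| -> sign_vector eps -> (2 %| \sum_(j in J) eps j)%Z.
Proof.
move=> evJ s.
have -> : \sum_(j in J) eps j = \sum_(j in J) (eps j - 1) + #|J|%:Z.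
  by rewrite sumrB sumr_const natz subrK.
rewrite rpredD //; last by rewrite dvdzE /= dvdn2.
by apply: rpred_sum => j _; case: (s j) => ->.
Qed.

Lemma Nval_mirror J h eps :
  Nval p (mirror p J h) eps =
  Nval p h (fun j => if j \in J then - eps j else eps j)
    + (bigP p)%:Z * \sum_(j in J) eps j.
Proof.
rewrite /Nval -addrA; congr (_ + _).
rewrite mulr_sumr [X in _ = _ + X]big_mkcond -big_split; apply: eq_bigr => j _.
by rewrite ffunE (bigPz_phat p_gt0 j) /=; case: (j \in J); ring.
Qed.

Lemma inS_mirror (J : {set 'I_r}) h m :
  ~~ odd #|J| -> inS p (mirror p J h) m -> inS p h m.
Proof.
move=> evJ [eps [s [k ->]]].
exists (fun j => if j \in J then - eps j else eps j); split.
  by move=> j; case: (j \in J); case: (s j) => ->; rewrite ?opprK; auto.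
have /dvdzP[t Et] := sum_signs_even evJ s.
by exists (k + t); rewrite Nval_mirror Et; ring.
Qed.

Lemma inS_hequiv h h' m : hequiv p h h' -> inS p h m -> inS p h' m.
Proof. by move/hequiv_sym/hequiv_mirror => [J evJ ->]; apply: inS_mirror. Qed.

End Equivalence.

Lemma signed_dvdz_eq (a b q e e' : int) :
  0 <= a -> a <= q -> 0 <= b -> b <= q -> (e = 1 \/ e = -1) -> (e' = 1 \/ e' = -1) ->
  (q * 2 %| e * a - e' * b)%Z -> a = b.
Proof.
move=> ? ? ? ? [->|->] [->|->] /dvdzP[c];
  (have [|[->|[->|]]] : c <= -1 \/ c = 0 \/ c = 1 \/ 2 <= c by lia); nia.
Qed.

Section Disjointness.
Variables (r : nat) (p : 'I_r -> nat).
Hypothesis p_gt0 : forall j, (0 < p j)%N.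
Hypothesis p_coprime : forall i j, i != j -> coprime (p i) (p j).
Hypothesis p_odd : forall j : 'I_r, (0 < val j)%N -> odd (p j).

Lemma dvdz_phat_coeff (d : int) (x : 'I_r -> int) j :
  coprimez d (phat p j) -> (d %| \sum_i x i * (phat p i)%:Z)%Z ->
  (forall i, i != j -> (d %| x i * (phat p i)%:Z)%Z) -> (d %| x j)%Z.
Proof.
move=> cop dvd_sum dvd_off; rewrite -(Gauss_dvdzl _ cop).
by move: dvd_sum; rewrite (bigD1 j) //= rpredDr // rpred_sum.
Qed.

Lemma inS_inL_inj l l' m :
  inL p l -> inL p l' -> inS p l m -> inS p l' m -> l = l'.
Proof.
case=> [[bnd _] ev] [[bnd' _] ev'] [eps [s [k Em]]] [eps' [s' [k' Em']]].
pose x i := eps i * l i - eps' i * l' i.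
have Dx : \sum_i x i * (phat p i)%:Z = (bigP p)%:Z * 2 * (k' - k).
  have -> : \sum_i x i * (phat p i)%:Z = Nval p l eps - Nval p l' eps'.
    rewrite /Nval opprD addrACA subrr add0r -sumrB.
    by apply: eq_bigr => i _; rewrite /x; ring.
  rewrite (_ : Nval p l eps = m - 2 * (bigP p)%:Z * k); last by rewrite Em; ring.
  by rewrite (_ : Nval p l' eps' = m - 2 * (bigP p)%:Z * k'); [ring | rewrite Em'; ring].
have x_even i : (0 < val i)%N -> (2 %| x i)%Z.
  by move=> i_gt0; rewrite rpredB ?dvdz_mull ?ev ?ev'.
apply/ffunP => j.
suff : ((p j)%:Z * 2 %| x j)%Z.
  by case: (bnd j) (bnd' j) => ? ? [? ?]; apply: signed_dvdz_eq (s j) (s' j).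
have dvd_sum : ((p j)%:Z * 2 %| \sum_i x i * (phat p i)%:Z)%Z.
  rewrite Dx (bigPz_phat p_gt0 j); apply/dvdzP.
  by exists ((phat p j)%:Z * (k' - k)); ring.
have cop_j : coprime (p j) (phat p j).
  by apply: coprime_phat => // i ij; apply: p_coprime; rewrite eq_sym.
case: (posnP (val j)) => [j0 | j_gt0].
  have off_gt0 i : i != j -> (0 < val i)%N.
    by rewrite lt0n; apply: contra => /eqP i0; apply/eqP/val_inj; rewrite /= i0 j0.
  apply: dvdz_phat_coeff dvd_sum _.
    rewrite coprimezMl !coprimezE /= cop_j coprime2n.
    by apply: odd_phat => // i /off_gt0; apply: p_odd.
  by move=> i ij; rewrite mulrC dvdz_mul ?dvdz_phat ?x_even ?off_gt0.
rewrite Gauss_dvdz; last by rewrite coprimezE /= coprimen2 p_odd.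
rewrite x_even // andbT.
apply: dvdz_phat_coeff; first by rewrite coprimezE.
  by apply: dvdz_trans dvd_sum; apply: dvdz_mulr (dvdzz _).
by move=> i ij; rewrite dvdz_mull ?dvdz_phat.
Qed.

End Disjointness.

Lemma setD1_even_eq (T : finType) (x : T) (A B : {set T}) :
  A :\ x = B :\ x -> ~~ odd #|A| -> ~~ odd #|B| -> A = B.
Proof.
move=> AB evA evB; have xAB : (x \in A) = (x \in B).
  move: evA evB; rewrite (cardsD1 x A) (cardsD1 x B) AB !oddD !oddb.
  by case: (x \in A); case: (x \in B); case: (odd _).
apply/setP => y; case: (y =P x) => [-> // | /eqP yx].
by move/setP/(_ y): AB; rewrite !inE yx.
Qed.

Lemma exists_even_setD1 (T : finType) (x : T) (D : {set T}) :
  exists2 A : {set T}, A :\ x = D :\ x & ~~ odd #|A|.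
Proof.
case odd_D: (odd #|D :\ x|).
  exists (x |: D :\ x); first by rewrite setU1K // setD11.
  by rewrite cardsU1 setD11 add1n /= odd_D.
exists (D :\ x); last by rewrite odd_D.
by apply/setP => y; rewrite !inE andbA andbb.
Qed.

Section Representatives.
Variables (r : nat) (p : 'I_r -> nat).
Hypothesis r_gt0 : (0 < r)%N.
Hypothesis p_odd : forall j : 'I_r, (0 < val j)%N -> odd (p j).

Lemma dvdz2_mirror J h j : (0 < val j)%N ->
  (2 %| mirror p J h j)%Z = (j \in J) (+) (2 %| h j)%Z.
Proof.
move=> /p_odd odd_p; rewrite ffunE; case: (j \in J) => //=.
have : ~~ (2 %| (p j)%:Z)%Z by rewrite dvdzE /= dvdn2 odd_p.
by move=> ?; apply/idP/idP; lia.
Qed.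

Lemma mirror_inH J h : inH p h -> inH p (mirror p J h).
Proof.
case=> bnd card; split.
  by move=> j; rewrite ffunE; case: (bnd j); case: (j \in J); lia.
apply: leq_trans card _; apply: subset_leq_card; apply/subsetP => j.
by rewrite !inE ffunE; case: (j \in J); rewrite ?rpredBl ?dvdzz.
Qed.

Let o0 : 'I_r := Ordinal r_gt0.

Lemma inL_mirror J h : inH p h ->
  inL p (mirror p J h) <-> J :\ o0 = [set j | ~~ (2 %| h j)%Z] :\ o0.
Proof.
move=> Hh; have pos j : (0 < val j)%N = (j != o0) by rewrite lt0n -val_eqE.
split=> [[_ ev] | JD].
  apply/setP => j; rewrite !inE -pos; case: (posnP (val j)) => // j_gt0 /=.
  by move: (ev j j_gt0); rewrite dvdz2_mirror //; case: (j \in J); case: (2 %| h j)%Z.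
split=> [|j j_gt0]; first exact: mirror_inH.
rewrite dvdz2_mirror //.
by move/setP/(_ j): JD; rewrite !inE -pos j_gt0 /= => ->; case: (2 %| h j)%Z.
Qed.

Lemma inL_represents h : inH p h ->
  exists l, inL p l /\ hequiv p h l /\
    forall l', inL p l' -> hequiv p h l' -> l' = l.
Proof.
move=> Hh; have [J JD evJ] := exists_even_setD1 o0 [set j | ~~ (2 %| h j)%Z].
exists (mirror p J h); split; first exact/(inL_mirror _ Hh).
split; first by apply/hequiv_mirror; exists J.
move=> l' Ll' /hequiv_mirror[J' evJ' El']; rewrite El' in Ll' *.
congr mirror; apply: (setD1_even_eq (x := o0) _ evJ' evJ).
by rewrite JD; apply/(inL_mirror _ Hh).
Qed.

End Representatives.

Unset Implicit Arguments.

Theorem lemmaB2 (r : nat) (p : 'I_r -> nat)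
  (hr : (3 <= r)%N)
  (hpos : forall j, (0 < p j)%N)
  (hcop : forall i j, i != j -> coprime (p i) (p j))
  (hodd : forall j : 'I_r, (0 < val j)%N -> odd (p j)) :
  (* (i) L is a system of representatives of H / ~ *)
  ((forall l, inL p l -> inH p l) /\
   (forall h, inH p h -> exists l, inL p l /\ hequiv p h l /\
        forall l', inL p l' -> hequiv p h l' -> l' = l)) /\
  (* (ii) *)
  (forall h h', inH p h -> inH p h' -> hequiv p h h' ->
     Jset p h = Jset p h' /\ (forall m, inS p h m <-> inS p h' m)) /\
  (* (iii) *)
  (forall l l', inL p l -> inL p l' -> l <> l' ->
     forall m, ~ (inS p l m /\ inS p l' m)) /\
  (* (iv) *)
  (forall l, inL p l -> exists c : int,
     forall m, inS p l m -> (m ^+ 2 %% (4 * (bigP p)%:Z))%Z = c).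
Proof.
split; [split | split; [|split]].
- by move=> l [].
- exact: inL_represents (leq_trans _ hr) hodd.
- move=> h h' _ _ E; split; first exact: Jset_hequiv.
  by move=> m; split; apply: inS_hequiv => //; apply: hequiv_sym.
- move=> l l' Ll Ll' ne m [S S']; exact/ne/(inS_inL_inj hpos hcop hodd Ll Ll' S S').
- by move=> l _; apply: sqr_mod_inS_const.
Qed.
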